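(* Let $c_1\ge\dots\ge c_{m+1}\ge0$ and $d_1\ge\dots\ge d_m\ge0$ be integers, let $(r_1,r_2,\dots)$ and $(s_1,s_2,\dots)$ be the conjugate partitions of $(c_1,\dots,c_{m+1})$ and $(d_1,\dots,d_m)$, $r_0=m+1=s_0+1$, $\mathbf r=(r_0,r_1,\dots)$, $\mathbf s=(s_0,s_1,\dots)$. Then $\mathtt c=(c_1,\dots,c_{m+1})\prec'\mathtt d=(d_1,\dots,d_m)$ if and only if $\mathbf s\angle\mathbf r$.
   Context: Conjugate of $(a_1,\dots,a_n)$ (nonincreasing, nonnegative): $(\bar a_1,\bar a_2,\dots)$, $\bar a_k=\#\{i:a_i\ge k\}$. 1step-majorization: for integer chains $\mathtt d=(d_1,\dots,d_m)$ and $\mathtt c=(c_1,\dots,c_{m+1})$ (nonincreasing), $\mathtt c\prec'\mathtt d$ means $d_i=c_{i+1}$ for all $h\le i\le m$, where $h=\min\{i: d_i<c_i\}$ with $d_{m+1}=-\infty$. Conjugate majorization: for nonincreasing nonnegative sequences $\mathbf r=(r_0,r_1,\dots)$, $\mathbf s=(s_0,s_1,\dots)$, $\mathbf s\angle\mathbf r$ means $r_0=s_0+1$ and $r_i=s_i+1$ for $0\le i\le g$, where $g=\max\{i: r_i>s_i\}$. *)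

From mathcomp Require Import all_boot.
Set Implicit Arguments. Unset Strict Implicit. Unset Printing Implicit Defensive.

(* 1-based access to a finite integer chain: at1 s i = s_i for 1 <= i <= size s. *)
Definition at1 (s : seq nat) (i : nat) : nat := nth 0 s i.-1.

(* Extended conjugate sequence (a_0-bar, a_1-bar, ...): index 0 is the length
   of the chain (so r_0 = m+1 for c, s_0 = m for d), and for k >= 1 it is
   #{i : a_i >= k}. *)
Definition conjseq (a : seq nat) (k : nat) : nat :=
  if k == 0 then size a else count (fun x => k <= x) a.

(* h = min{i : d_i < c_i}, with d_{m+1} = -oo (so h <= m+1 always), 1-based. *)
Definition hidx (c d : seq nat) : nat :=
  (find (fun i => at1 d i.+1 < at1 c i.+1) (iota 0 (size d))).+1.

Definition onestep_maj (c d : seq nat) : Prop :=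
  forall i, hidx c d <= i <= size d -> at1 d i = at1 c i.+1.

(* Conjugate majorization  s /_ r : r_0 = s_0 + 1 and r_i = s_i + 1 for
   0 <= i <= g, where g = max{i : r_i > s_i} (g is characterised as the index
   with r_g > s_g and r_j <= s_j for all j > g). *)
Definition conj_maj (s r : nat -> nat) : Prop :=
  r 0 = s 0 + 1 /\
  exists g, [/\ s g < r g, (forall j, g < j -> r j <= s j)
              & forall i, i <= g -> r i = s i + 1].

From mathcomp Require Import all_boot.

Set Implicit Arguments.
Unset Strict Implicit.

(* Let h be the first index with d_h < c_h, so that c_i <= d_i before h.  For a
   nonincreasing chain a, [j < conj(a)_k] holds exactly when [k <= a_j]; hence
   conjugates compare as the chains do, threshold by threshold.  If d_i = c_(i+1)
   from h on, then for every k <= c_h the chains (c_2, ..., c_(m+1)) and d pass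
   the threshold k at the same places, so r_k = s_k + 1, while a part of c of
   size k > c_h lies before h and is dominated by the corresponding part of d,
   so r_k <= s_k: thus g = c_h.  Conversely, d_h < c_h forces c_h <= g, and the
   equalities r_k = s_k + 1 for k <= c_h pin down the entries d_i and c_(i+1),
   i >= h, all of which are at most c_h. *)

Lemma ltn_conjseq s k j : sorted geq s -> 0 < k ->
  (j < conjseq s k) = (k <= nth 0 s j).
Proof.
move=> + k_gt0; rewrite /conjseq gtn_eqF //.
elim: s j => [|x s IH] j x_path /=; first by rewrite nth_nil ltn0; case: k k_gt0.
have s_sorted := path_sorted x_path.
have [k_le_x | x_lt_k] := leqP k x.
  by case: j => [|j] /=; rewrite add1n ?k_le_x // ltnS IH.
have head_lt_k : nth 0 s 0 < k.
  case: s x_path {IH s_sorted} => //= y s /andP[y_le_x _].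
  exact: leq_ltn_trans y_le_x x_lt_k.
have count0 : count (fun y => k <= y) s = 0.
  by apply/eqP; rewrite -leqn0 leqNgt IH // -ltnNge.
have k_gt_x : (k <= x) = false by rewrite leqNgt x_lt_k.
by case: j => [|j] /=; rewrite count0 ?k_gt_x // -(IH j) // count0.
Qed.

Lemma sorted_geq_nth s i j : sorted geq s -> i <= j -> nth 0 s j <= nth 0 s i.
Proof.
move=> s_sorted i_le_j; case sj: (nth 0 s j) => [|k] //.
have j_lt : j < conjseq s k.+1 by rewrite ltn_conjseq // sj.
by rewrite -ltn_conjseq //; apply: leq_ltn_trans j_lt.
Qed.

Lemma leq_conjseq s t k : sorted geq s -> sorted geq t -> 0 < k ->
  (forall j, k <= nth 0 s j -> k <= nth 0 t j) -> conjseq s k <= conjseq t k.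
Proof.
move=> s_sorted t_sorted k_gt0 st; rewrite leqNgt; apply/negP.
by rewrite ltn_conjseq // => /st; rewrite -ltn_conjseq // ltnn.
Qed.

Lemma eq_conjseq s t k : sorted geq s -> sorted geq t -> 0 < k ->
  conjseq s k = conjseq t k <-> (forall j, (k <= nth 0 s j) = (k <= nth 0 t j)).
Proof.
move=> s_sorted t_sorted k_gt0; split=> [st j | st].
  by rewrite -!ltn_conjseq // st.
by apply/eqP; rewrite eqn_leq !leq_conjseq // => j; rewrite st.
Qed.

Lemma conjseq_cons x s k : 0 < k -> conjseq (x :: s) k = (k <= x) + conjseq s k.
Proof. by move=> k_gt0; rewrite /conjseq gtn_eqF. Qed.

Lemma eq_from_thresholds a b K : a <= K -> b <= K ->
  (forall k, 0 < k <= K -> (k <= a) = (k <= b)) -> a = b.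
Proof.
move=> a_le_K b_le_K ab; apply/eqP; rewrite eqn_leq; apply/andP; split.
  by case: a a_le_K ab => // a a_le_K ab; rewrite -ab ?a_le_K.
by case: b b_le_K ab => // b b_le_K ab; rewrite ab ?b_le_K.
Qed.

Lemma hidx_leq_size c d : (hidx c d).-1 <= size d.
Proof. by rewrite /= -[leqRHS](size_iota 0) find_size. Qed.

Lemma nth_lt_hidx c d i : i < (hidx c d).-1 -> nth 0 c i <= nth 0 d i.
Proof.
move=> i_lt; have := before_find 0 i_lt.
by rewrite nth_iota ?(leq_trans i_lt (hidx_leq_size c d)) // add0n => /negbT; rewrite -leqNgt.
Qed.

Lemma nth_hidx c d : (hidx c d).-1 < size d ->
  nth 0 d (hidx c d).-1 < nth 0 c (hidx c d).-1.
Proof.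
move=> h_lt; move: (h_lt); rewrite /= -[ltnRHS](size_iota 0) -has_find.
by move/(nth_find 0); rewrite nth_iota.
Qed.

Lemma onestep_majE c d : onestep_maj c d <->
  (forall j, (hidx c d).-1 <= j < size d -> nth 0 d j = nth 0 c j.+1).
Proof.
split=> [tail_eq j /andP[h_le_j j_lt] | tail_eq [|j] // /andP[h_le_j j_le]].
  exact: (tail_eq j.+1 (introT andP (conj h_le_j j_lt))).
exact: (tail_eq j (introT andP (conj h_le_j j_le))).
Qed.

Section OneStepConjugate.

Variables (c1 : nat) (c' d : seq nat).
Hypotheses (size_c' : size c' = size d)
  (sorted_c : sorted geq (c1 :: c')) (sorted_d : sorted geq d).

Let sorted_c' : sorted geq c'. Proof. exact: path_sorted sorted_c. Qed.
Let h := (hidx (c1 :: c') d).-1.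

Lemma conj_maj_of_onestep_maj :
  onestep_maj (c1 :: c') d -> conj_maj (conjseq d) (conjseq (c1 :: c')).
Proof.
move/onestep_majE; rewrite -/h => tail_eq.
set g := nth 0 (c1 :: c') h.
have agree k j : 0 < k <= g -> (k <= nth 0 c' j) = (k <= nth 0 d j).
  case/andP=> k_gt0 k_le_g; have [j_lt_h | h_le_j] := ltnP j h.
    have k_le_c' : k <= nth 0 c' j.
      exact: leq_trans k_le_g (sorted_geq_nth sorted_c j_lt_h).
    have k_le_d : k <= nth 0 d j.
      apply: leq_trans k_le_g (leq_trans _ (nth_lt_hidx j_lt_h)).
      exact: sorted_geq_nth sorted_c (ltnW j_lt_h).
    by rewrite k_le_c' k_le_d.
  have [j_lt_m | m_le_j] := ltnP j (size d); first by rewrite tail_eq ?h_le_j.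
  by rewrite !nth_default ?size_c'.
have conj_succ k : k <= g -> conjseq (c1 :: c') k = conjseq d k + 1.
  case: k => [|k] k_le_g; first by rewrite /conjseq /= size_c' addn1.
  have k_le_c1 : k.+1 <= c1.
    exact: leq_trans k_le_g (sorted_geq_nth sorted_c (leq0n h)).
  rewrite conjseq_cons // k_le_c1 add1n addn1; congr _.+1.
  by apply/eq_conjseq => // j; apply: agree.
split; first exact: conj_succ (leq0n g).
exists g; split=> [|k g_lt_k|]; last exact: conj_succ.
- by rewrite conj_succ // addn1.
- apply: leq_conjseq => // [|j k_le_c]; first exact: leq_ltn_trans g_lt_k.
  have j_lt_h : j < h.
    rewrite ltnNge; apply/negP => h_le_j.
    have := leq_trans k_le_c (sorted_geq_nth sorted_c h_le_j).
    by rewrite leqNgt g_lt_k.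
  exact: leq_trans k_le_c (nth_lt_hidx j_lt_h).
Qed.

Lemma onestep_maj_of_conj_maj :
  conj_maj (conjseq d) (conjseq (c1 :: c')) -> onestep_maj (c1 :: c') d.
Proof.
case=> _ [g [_ above_g upto_g]]; apply/onestep_majE; rewrite -/h.
move=> j /andP[h_le_j j_lt_m].
set k0 := nth 0 (c1 :: c') h.
have d_lt_k0 : nth 0 d h < k0 := nth_hidx (leq_ltn_trans h_le_j j_lt_m).
have k0_gt0 : 0 < k0 := leq_ltn_trans (leq0n _) d_lt_k0.
have k0_le_g : k0 <= g.
  rewrite leqNgt; apply/negP => /above_g; apply/negP; rewrite -ltnNge.
  apply: (@leq_ltn_trans h); last by rewrite ltn_conjseq.
  by rewrite leqNgt ltn_conjseq // -ltnNge.
have agree k : 0 < k <= k0 -> (k <= nth 0 d j) = (k <= nth 0 c' j).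
  case/andP=> k_gt0 k_le_k0.
  have k_le_c1 : k <= c1.
    exact: leq_trans k_le_k0 (sorted_geq_nth sorted_c (leq0n h)).
  move: (upto_g k (leq_trans k_le_k0 k0_le_g)).
  rewrite conjseq_cons // k_le_c1 add1n addn1 => -[].
  by move/eq_conjseq => ->.
apply: (@eq_from_thresholds _ _ k0) agree.
  exact: ltnW (leq_ltn_trans (sorted_geq_nth sorted_d h_le_j) d_lt_k0).
exact: sorted_geq_nth sorted_c (leqW h_le_j).
Qed.

End OneStepConjugate.

Theorem proposition4p5 (m : nat) (c d : seq nat) :
  size c = m.+1 -> size d = m -> sorted geq c -> sorted geq d ->
  (onestep_maj c d <-> conj_maj (conjseq d) (conjseq c)).
Proof.
case: c => [|c1 c'] // [size_c'] size_d sorted_c sorted_d.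
have size_c'_d : size c' = size d by rewrite size_c' size_d.
split; [exact: conj_maj_of_onestep_maj | exact: onestep_maj_of_conj_maj].
Qed.
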